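(* Let $P_{B(K^{\pm})}$ be the unital associative complex algebra generated by elements $B_i^{+}, B_i^{-}$ ($i=1,2,\ldots$) and $K^{+}, K^{-}$ subject to the relations $$\big[\{B_i^{\xi}, B_j^{\eta}\}, B_k^{\epsilon}\big] = (\epsilon-\eta)\delta_{jk}B_i^{\xi} + (\epsilon-\xi)\delta_{ik}B_j^{\eta}\quad(\xi,\eta,\epsilon\in\{\pm1\},\ i,j,k=1,2,\ldots),$$ $$K^{+}K^{-} = K^{-}K^{+} = 1,\qquad \{K^{+}, B_i^{\pm}\} = 0 = \{K^{-}, B_i^{\pm}\}\quad (i=1,2,\ldots).$$ Then there is a unique algebra homomorphism $\Delta: P_{B(K^{\pm})}\to P_{B(K^{\pm})}\otimes P_{B(K^{\pm})}$ (ordinary tensor product algebra, $(a\otimes b)(c\otimes d)=ac\otimes bd$), a unique algebra homomorphism $\varepsilon: P_{B(K^{\pm})}\to\mathbb{C}$ and a unique algebra anti-homomorphism $S: P_{B(K^{\pm})}\to P_{B(K^{\pm})}$ with $$\Delta(B_i^{\pm}) = B_i^{\pm}\otimes 1 + K^{\pm}\otimes B_i^{\pm},\quad \Delta(K^{\pm}) = K^{\pm}\otimes K^{\pm},\quad \varepsilon(B_i^{\pm}) = 0,\quad \varepsilon(K^{\pm}) = 1,$$ $$S(B_i^{\pm}) = B_i^{\pm}K^{\mp},\qquad S(K^{\pm}) = K^{\mp},$$ for all $i=1,2,\ldots$, and with these maps $P_{B(K^{\pm})}$ is an (ordinary) Hopf algebra.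
   Context: $[A,B]=AB-BA$ and $\{A,B\}=AB+BA$; in the relations the signs $\xi,\eta,\epsilon$ are read as the integers $\pm1$. In the formulas for $\Delta$ and $S$ the upper signs correspond (e.g. $\Delta(B_i^{+}) = B_i^{+}\otimes 1 + K^{+}\otimes B_i^{+}$, $S(B_i^{+}) = B_i^{+}K^{-}$). *)

From HB Require Import structures.
From mathcomp Require Import all_boot all_order all_algebra.
From mathcomp Require Import complex.
From mathcomp Require Export reals.
Set Implicit Arguments. Unset Strict Implicit. Unset Printing Implicit Defensive.
Import Order.TTheory GRing.Theory Num.Theory.
Local Open Scope ring_scope.

Section Defs.
Variable C : fieldType.

Definition lin (U W : lmodType C) (f : U -> W) :=
  forall (a : C) (u v : U), f (a *: u + v) = a *: f u + f v.
Definition bilin (U V W : lmodType C) (f : U -> V -> W) :=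
  (forall v, lin (fun u => f u v)) /\ (forall u, lin (f u)).

(* (T, t) is a tensor product of U and V, [lift W f] being the linear map
   T -> W induced by a bilinear f : U -> V -> W (universal property). *)
Definition is_tensor (U V T : lmodType C) (t : U -> V -> T)
    (lift : forall W : lmodType C, (U -> V -> W) -> T -> W) :=
  bilin t /\
  forall (W : lmodType C) (f : U -> V -> W), bilin f ->
    [/\ lin (lift W f),
        (forall u v, lift W f (t u v) = f u v) &
        (forall g : T -> W, lin g -> (forall u v, g (t u v) = f u v) ->
           forall x, g x = lift W f x)].

Definition is_algtensor (A B T : algType C) (t : A -> B -> T)
    (lift : forall W : lmodType C, (A -> B -> W) -> T -> W) :=
  [/\ is_tensor t lift,
      (forall a b c d, t a b * t c d = t (a * c) (b * d)) &
      t 1 1 = 1].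

Definition alg_hom (A D : algType C) (f : A -> D) :=
  [/\ lin f, (forall x y, f (x * y) = f x * f y) & f 1 = 1].
Definition alg_antihom (A D : algType C) (f : A -> D) :=
  [/\ lin f, (forall x y, f (x * y) = f y * f x) & f 1 = 1].
Definition char_hom (A : algType C) (f : A -> C) :=
  [/\ (forall (a : C) (u v : A), f (a *: u + v) = a * f u + f v),
      (forall x y, f (x * y) = f x * f y) & f 1 = 1].

(* signs xi in {+1,-1}: true = +, false = - *)
Definition sgn (s : bool) : C := if s then 1 else -1.
Definition kd (i j : nat) : C := (i == j)%:R.

(* Generators: b s i = B_{i+1}^s (i : nat, so index i stands for i+1),
   k s = K^s.  Defining relations of P_{B(K^pm)}. *)
Definition PB_rels (D : algType C) (b : bool -> nat -> D) (k : bool -> D) :=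
  [/\ (forall (x y z : bool) (i j l : nat),
         let ac := b x i * b y j + b y j * b x i in
         ac * b z l - b z l * ac =
         ((sgn z - sgn y) * kd j l) *: b x i + ((sgn z - sgn x) * kd i l) *: b y j),
      k true * k false = 1, k false * k true = 1 &
      (forall (s u : bool) (i : nat), k s * b u i + b u i * k s = 0)].

(* (A, b, k) is the unital associative algebra presented by these generators
   and relations: universal property among C-algebras. *)
Definition is_PB (A : algType C) (b : bool -> nat -> A) (k : bool -> A) :=
  PB_rels b k /\
  forall (D : algType C) (b' : bool -> nat -> D) (k' : bool -> D),
    PB_rels b' k' ->
    exists f : A -> D,
      [/\ alg_hom f, (forall s i, f (b s i) = b' s i), (forall s, f (k s) = k' s) &
          (forall g : A -> D, alg_hom g -> (forall s i, g (b s i) = b' s i) ->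
             (forall s, g (k s) = k' s) -> forall x, g x = f x)].

(* Hopf algebra axioms for (A, m, 1, Delta, eps, S), with A (x) A given by
   (AA, t, liftAA) and (A (x) A) (x) A given by (AAA, t3, lift3). *)
Definition is_hopf (A AA : algType C) (AAA : lmodType C)
    (t : A -> A -> AA) (liftAA : forall W : lmodType C, (A -> A -> W) -> AA -> W)
    (t3 : AA -> A -> AAA)
    (Delta : A -> AA) (eps : A -> C) (S : A -> A) :=
  [/\ alg_hom Delta /\ char_hom eps /\ lin S,
      (* coassociativity: (Delta (x) id) Delta = (id (x) Delta) Delta *)
      (forall a, liftAA AAA (fun x y => t3 (Delta x) y) (Delta a) =
                 liftAA AAA (fun x y => liftAA AAA (fun p q => t3 (t x p) q) (Delta y))
                        (Delta a)),
      (forall a, liftAA A (fun x y => eps x *: y) (Delta a) = a /\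
                 liftAA A (fun x y => eps y *: x) (Delta a) = a) &
      (* antipode: m (S (x) id) Delta = m (id (x) S) Delta = eta eps *)
      (forall a, liftAA A (fun x y => S x * y) (Delta a) = eps a *: 1 /\
                 liftAA A (fun x y => x * S y) (Delta a) = eps a *: 1)].
End Defs.

From HB Require Import structures.
From mathcomp Require Import all_boot all_order all_algebra ssrAC.
From mathcomp Require Import complex reals boolp.
(* Since P_B(K^pm) is presented by generators and relations, Delta, eps and S
   exist and are unique as soon as the prescribed images of the generators
   satisfy the defining relations: for Delta the images are skew-primitive
   elements u (x) 1 + K (x) u, and anticommutation of K with the B's makes the
   (anti)commutators of skew-primitives skew-primitive again; S is a
   homomorphism into the opposite algebra.  Every element is reached from the
   generators by products and linear combinations, and each Hopf axiom, written
   with a Sweedler representation Delta a = sum a1 (x) a2, is preserved by both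
   operations, so it only needs to be checked on generators.  For
   coassociativity the identity is stated for an arbitrary trilinear pairing,
   which is what makes the product step go through. *)

Set Implicit Arguments.
Unset Strict Implicit.
Unset Printing Implicit Defensive.

Import Order.TTheory GRing.Theory Num.Theory.
Local Open Scope ring_scope.

Section LinearMaps.
Variables (C : fieldType) (U V W : lmodType C).

Section OneMap.
Variables (f : U -> W) (lin_f : lin f).

Lemma lin0 : f 0 = 0.
Proof. by have := lin_f (-1) 0 0; rewrite scaler0 addr0 scaleN1r addNr. Qed.

Lemma linD u v : f (u + v) = f u + f v.
Proof. by have := lin_f 1 u v; rewrite !scale1r. Qed.

Lemma linZ a u : f (a *: u) = a *: f u.
Proof. by have := lin_f a u 0; rewrite !addr0 lin0 addr0. Qed.

Lemma linN u : f (- u) = - f u.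
Proof. by rewrite -scaleN1r linZ scaleN1r. Qed.

Lemma linB u v : f (u - v) = f u - f v.
Proof. by rewrite linD linN. Qed.

Lemma lin_sum (I : Type) (s : seq I) (F : I -> U) :
  f (\sum_(i <- s) F i) = \sum_(i <- s) f (F i).
Proof.
elim: s => [|x s IH]; first by rewrite !big_nil lin0.
by rewrite !big_cons linD IH.
Qed.

End OneMap.

Lemma lin_comp (f : U -> V) (g : V -> W) : lin f -> lin g -> lin (g \o f).
Proof. by move=> lin_f lin_g a u v /=; rewrite lin_f lin_g. Qed.

Lemma lin_bigsum (I : Type) (s : seq I) (F : I -> U -> W) :
  (forall i, lin (F i)) -> lin (fun u => \sum_(i <- s) F i u).
Proof.
move=> lin_F a u v; elim: s => [|x s IH]; first by rewrite !big_nil scaler0 addr0.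
by rewrite !big_cons IH lin_F scalerDr addrACA.
Qed.

End LinearMaps.

Section LinearMul.
Variables (C : fieldType) (A : algType C) (W : lmodType C) (f : A -> W) (c : A).
Hypothesis lin_f : lin f.

Lemma lin_mulr : lin (fun u => f (u * c)).
Proof. by move=> a u v; rewrite mulrDl -scalerAl lin_f. Qed.

Lemma lin_mull : lin (fun u => f (c * u)).
Proof. by move=> a u v; rewrite mulrDr -scalerAr lin_f. Qed.

End LinearMul.

Section Anticommute.
Variable R : pzRingType.
Implicit Types x y z w : R.

Definition anticomm x y := x * y = - (y * x).

Lemma anticommMr x y z : anticomm x y -> anticomm x z -> GRing.comm x (y * z).
Proof.
move=> xy xz; rewrite /GRing.comm mulrA xy mulNr -mulrA xz.
by rewrite mulrN opprK mulrA.
Qed.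

Lemma anticommMl x y z : anticomm x z -> anticomm y z -> GRing.comm (x * y) z.
Proof.
move=> xz yz; rewrite /GRing.comm -mulrA yz mulrN mulrA xz.
by rewrite mulNr opprK mulrA.
Qed.

Lemma anticomm_mulrACA x y z w : anticomm y z -> (x * y) * (z * w) = - ((x * z) * (y * w)).
Proof. by move=> yz; rewrite -!mulrA [y * (z * w)]mulrA yz mulNr mulrN -!mulrA. Qed.

End Anticommute.

Section PBRelations.
Variables (C : fieldType) (A : algType C) (b : bool -> nat -> A) (k : bool -> A).
Hypothesis rels : PB_rels b k.

Lemma mulk_neq s u : s != u -> k s * k u = 1.
Proof. by case: rels => _ kk1 kk2 _; case: s; case: u. Qed.

Lemma commr_k s u : GRing.comm (k s) (k u).
Proof.
rewrite /GRing.comm; case: (eqVneq s u) => [-> //|neq_su].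
by rewrite !mulk_neq // eq_sym.
Qed.

Lemma anticomm_kb s u i : anticomm (k s) (b u i).
Proof. by case: rels => _ _ _ kb; apply/eqP; rewrite -addr_eq0 kb. Qed.

End PBRelations.

Lemma scale_sgnB (C : fieldType) (V : lmodType C) (y z : bool) (c : C) (v w : V) :
  (y != z -> v = w) -> ((sgn C z - sgn C y) * c) *: v = ((sgn C z - sgn C y) * c) *: w.
Proof.
case: (eqVneq y z) => [-> _|neq_yz vw]; first by rewrite subrr mul0r !scale0r.
by rewrite vw.
Qed.

Section SkewPrimitive.
Variables (C : fieldType) (A AA : algType C) (t : A -> A -> AA).
Hypotheses (t_bilin : bilin t) (t_mul : forall a b c d, t a b * t c d = t (a * c) (b * d)).

Definition skewprim (x u : A) := t u 1 + t x u.

Lemma lin_skewprim x : lin (skewprim x).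
Proof.
move=> a u v; rewrite /skewprim (t_bilin.1 1) (t_bilin.2 x).
by rewrite scalerDr addrACA.
Qed.

Lemma skewprimM x y u v : skewprim x u * skewprim y v =
  t (u * v) 1 + t (u * y) v + (t (x * v) u + t (x * y) (u * v)).
Proof. by rewrite /skewprim mulrDl !mulrDr !t_mul !mulr1 !mul1r. Qed.

Lemma skewprim_anticomm x y u v :
  anticomm y u -> anticomm x v -> GRing.comm x y ->
  skewprim x u * skewprim y v + skewprim y v * skewprim x u =
  skewprim (x * y) (u * v + v * u).
Proof.
move=> yu xv xy; rewrite !skewprimM yu xv -xy /skewprim.
rewrite (linN (t_bilin.1 _)) (linN (t_bilin.1 _)) (linD (t_bilin.1 _)) (linD (t_bilin.2 _)).
rewrite !addrA [LHS](ACl (((1*5)*(4*8))*((2*7)*(6*3))))%AC /=.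
by rewrite !subrr !addr0 !addrA.
Qed.

Lemma skewprim_comm x y u v : GRing.comm u y -> GRing.comm x v -> GRing.comm x y ->
  skewprim x u * skewprim y v - skewprim y v * skewprim x u =
  skewprim (x * y) (u * v - v * u).
Proof.
move=> uy xv xy; rewrite !skewprimM uy -xv -xy /skewprim.
rewrite (linB (t_bilin.1 _)) (linB (t_bilin.2 _)).
rewrite !opprD !addrA [LHS](ACl (((1*5)*(4*8))*((2*7)*(3*6))))%AC /=.
by rewrite !subrr !addr0 !addrA.
Qed.

End SkewPrimitive.

Section OppositeAlgebra.
Variables (K : pzRingType) (A : algType K).

Definition opp_alg : Type := A^c.
HB.instance Definition _ := GRing.NzRing.on opp_alg.
HB.instance Definition _ := GRing.Lmodule.copy opp_alg A.

Lemma opp_alg_scalerAl (a : K) (x y : opp_alg) : a *: (x * y) = (a *: x : opp_alg) * y.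
Proof. change (a *: ((y : A) * (x : A)) = (y : A) * (a *: (x : A))); exact: scalerAr. Qed.
HB.instance Definition _ := GRing.Lmodule_isLalgebra.Build K opp_alg opp_alg_scalerAl.

Lemma opp_alg_scalerAr (a : K) (x y : opp_alg) : a *: (x * y) = x * (a *: y : opp_alg).
Proof. change (a *: ((y : A) * (x : A)) = (a *: (y : A)) * (x : A)); exact: scalerAl. Qed.
HB.instance Definition _ := GRing.Lalgebra_isAlgebra.Build K opp_alg opp_alg_scalerAr.

End OppositeAlgebra.

Section GeneratorImages.
Variables (C : fieldType) (A : algType C) (b : bool -> nat -> A) (k : bool -> A).
Hypothesis rels : PB_rels b k.
Let kb := anticomm_kb rels.
Let kk := commr_k rels.
Let kk1 := mulk_neq rels.

Lemma coprod_rels (AA : algType C) (t : A -> A -> AA) :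
  bilin t -> (forall a b c d, t a b * t c d = t (a * c) (b * d)) -> t 1 1 = 1 ->
  PB_rels (fun s i => skewprim t (k s) (b s i)) (fun s => t (k s) (k s)).
Proof.
move=> t_bilin t_mul t_one; have [bracket k_tf k_ft _] := rels.
split=> [x y z i j l /=|/=|/=|s u i /=].
- set X := b x i * b y j + b y j * b x i.
  have X_kz : GRing.comm X (k z).
    by rewrite /GRing.comm mulrDr mulrDl !(anticommMr (kb _ _ _) (kb _ _ _)).
  have kxy_bz : GRing.comm (k x * k y) (b z l) := anticommMl (kb _ _ _) (kb _ _ _).
  rewrite (skewprim_anticomm t_bilin t_mul (kb _ _ _) (kb _ _ _) (kk _ _)).
  rewrite (skewprim_comm t_bilin t_mul X_kz kxy_bz (commr_sym (commrM (kk z x) (kk z y)))).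
  rewrite bracket (linD (lin_skewprim t_bilin _)) !(linZ (lin_skewprim t_bilin _)).
  congr (_ + _); apply: scale_sgnB => neq.
    by rewrite -mulrA kk1 ?mulr1.
  by rewrite (kk x) -mulrA kk1 ?mulr1.
- by rewrite t_mul k_tf t_one.
- by rewrite t_mul k_ft t_one.
- rewrite /skewprim mulrDr mulrDl !t_mul !mulr1 !mul1r kb (kk u s).
  rewrite (linN (t_bilin.1 _)) (linN (t_bilin.2 _)).
  by rewrite addrACA !addNr addr0.
Qed.

Lemma antipode_bracket x y z i j l :
  let B u m := b u m * k (~~ u) in
  let ac := B y j * B x i + B x i * B y j in
  B z l * ac - ac * B z l =
  ((sgn C z - sgn C y) * kd C j l) *: B x i + ((sgn C z - sgn C x) * kd C i l) *: B y j.
Proof.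
move=> B ac; rewrite {}/ac {}/B; have [bracket _ _ _] := rels.
have swap u m v n : b u m * k (~~ u) * (b v n * k (~~ v)) =
    - (b u m * b v n * (k (~~ u) * k (~~ v))).
  exact: anticomm_mulrACA (kb _ _ _).
rewrite !swap (kk (~~ y) (~~ x)) -opprD -mulrDl [b y j * b x i + _]addrC.
set X := b x i * b y j + b y j * b x i; set M := k (~~ x) * k (~~ y).
have X_kz : GRing.comm (k (~~ z)) X.
  by rewrite /GRing.comm mulrDr mulrDl !(anticommMr (kb _ _ _) (kb _ _ _)).
have M_bz : GRing.comm M (b z l) := anticommMl (kb _ _ _) (kb _ _ _).
have M_kz : GRing.comm (k (~~ z)) M := commrM (kk _ _) (kk _ _).
have bz_XM : b z l * k (~~ z) * (X * M) = b z l * X * (M * k (~~ z)).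
  by rewrite -mulrA [k _ * (X * M)]mulrA X_kz -[X * k _ * M]mulrA M_kz mulrA.
have XM_bz : X * M * (b z l * k (~~ z)) = X * b z l * (M * k (~~ z)).
  by rewrite -mulrA [M * (b z l * _)]mulrA M_bz -mulrA mulrA.
rewrite mulrN mulNr opprK bz_XM XM_bz -mulNr -mulrDl addrC.
have := bracket x y z i j l; rewrite /= -/X => ->.
rewrite mulrDl -!scalerAl; congr (_ + _); apply: scale_sgnB => neq.
  by rewrite /M -mulrA kk1 ?mulr1 // (inj_eq negb_inj).
by rewrite /M (kk (~~ x)) -mulrA kk1 ?mulr1 // (inj_eq negb_inj).
Qed.

Lemma antipode_rels : PB_rels (D := opp_alg A)
  (fun s i => b s i * k (~~ s) : opp_alg A) (fun s => k (~~ s) : opp_alg A).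
Proof.
have [_ k_tf k_ft _] := rels.
split=> [x y z i j l|||s u i]; [exact: antipode_bracket|exact: k_tf|exact: k_ft|].
change (b u i * k (~~ u) * k (~~ s) + k (~~ s) * (b u i * k (~~ u)) = 0).
by rewrite mulrA kb mulNr -!mulrA (kk (~~ s)) addrN.
Qed.

End GeneratorImages.

Lemma counit_rels (C : fieldType) :
  PB_rels (D := C^o) (fun _ _ => (0 : C^o)) (fun _ => (1 : C^o)).
Proof.
split=> [x y z i j l /=|||s u i].
- by rewrite !(mulr0, mul0r, scaler0, subrr, addr0).
- by rewrite mulr1.
- by rewrite mulr1.
- by rewrite mulr0 mul0r addr0.
Qed.

Section TensorLift.
Variables (C : fieldType) (U V T : lmodType C) (t : U -> V -> T)
  (lift : forall W : lmodType C, (U -> V -> W) -> T -> W).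
Hypothesis tensor : is_tensor t lift.

Lemma tensor_bilin : bilin t.
Proof. by case: tensor. Qed.

Variables (W : lmodType C) (f : U -> V -> W) (f_bilin : bilin f).

Lemma lin_lift : lin (lift f).
Proof. by case: tensor => _ /(_ _ f f_bilin) []. Qed.

Lemma liftE u v : lift f (t u v) = f u v.
Proof. by case: tensor => _ /(_ _ f f_bilin) []. Qed.

End TensorLift.

Section PresentedInduction.
Variables (C : fieldType) (A : algType C) (b : bool -> nat -> A) (k : bool -> A).
Hypothesis presented : is_PB b k.
Variable P : A -> Prop.
Hypotheses (P1 : P 1) (PM : forall x y, P x -> P y -> P (x * y))
  (PL : forall (c : C) x y, P x -> P y -> P (c *: x + y))
  (Pb : forall s i, P (b s i)) (Pk : forall s, P (k s)).

Definition Pmem : pred A := fun x => `[< P x >].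
Record Psub := PSub { Psub_val : A; _ : Psub_val \in Pmem }.
HB.instance Definition _ := [isSub for Psub_val].
HB.instance Definition _ := [Choice of Psub by <:].

Lemma Pmem_subalg_closed : GRing.subsemialg_closed Pmem.
Proof.
have P0 : P 0 by have := PL (-1) P1 P1; rewrite scaleN1r addNr.
split; first by apply/asboolP.
- split=> [|x y /asboolP Px /asboolP Py]; apply/asboolP => //.
  by have := PL 1 Px Py; rewrite scale1r.
- by move=> a x /asboolP Px; apply/asboolP; have := PL a Px P0; rewrite addr0.
- by move=> x y /asboolP Px /asboolP Py; apply/asboolP; apply: PM.
Qed.
HB.instance Definition _ :=
  GRing.SubChoice_isSubAlgebra.Build C A Pmem Psub Pmem_subalg_closed.

Lemma PB_ind x : P x.
Proof.
have [rels univ] := presented.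
have mem_b s i : b s i \in Pmem by apply/asboolP.
have mem_k s : k s \in Pmem by apply/asboolP.
pose bS s i := PSub (mem_b s i); pose kS s := PSub (mem_k s).
have relsS : PB_rels bS kS.
  have [bracket k_tf k_ft kb] := rels.
  split=> [x' y z i j l|||s u i]; apply: val_inj => /=;
    [exact: bracket | exact: k_tf | exact: k_ft | exact: kb].
have [f [[f_lin f_mul f_one] f_b f_k _]] := univ _ bS kS relsS.
have [f0 [_ _ _ f0_unique]] := univ _ b k rels.
(* Both the identity and [val \o f] extend the generators, hence both are [f0]. *)
have f0_id y : y = f0 y by apply: f0_unique.
have val_f y : val (f y) = f0 y.
  apply: (f0_unique (fun y => val (f y))) => [|s i /=|s /=]; last by rewrite f_k.
  - split=> [a u v /=|u v /=|/=]; by rewrite ?f_lin ?f_mul ?f_one.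
  - by rewrite f_b.
rewrite (f0_id x) -val_f; apply/asboolP; exact: (valP (f x)).
Qed.

End PresentedInduction.

Section HopfAxioms.
Variables (C : fieldType) (A : algType C) (b : bool -> nat -> A) (k : bool -> A).
Hypothesis presented : is_PB b k.
Variables (AA : algType C) (t : A -> A -> AA)
  (liftAA : forall W : lmodType C, (A -> A -> W) -> AA -> W).
Hypothesis tensor : is_algtensor t liftAA.
Variables (Delta : A -> AA) (eps : A -> C) (S : A -> A).
Hypotheses (Delta_hom : alg_hom Delta)
  (Delta_b : forall s i, Delta (b s i) = skewprim t (k s) (b s i))
  (Delta_k : forall s, Delta (k s) = t (k s) (k s))
  (eps_hom : char_hom eps) (eps_b : forall s i, eps (b s i) = 0)
  (eps_k : forall s, eps (k s) = 1)
  (S_antihom : alg_antihom S) (S_b : forall s i, S (b s i) = b s i * k (~~ s))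
  (S_k : forall s, S (k s) = k (~~ s)).

Let rels : PB_rels b k := presented.1.
Let ind := PB_ind presented.
Let t_tensor : is_tensor t liftAA. Proof. by case: tensor. Qed.
Let t_mul x1 y1 x2 y2 : t x1 y1 * t x2 y2 = t (x1 * x2) (y1 * y2). Proof. by case: tensor. Qed.
Let t_one : t 1 1 = 1. Proof. by case: tensor. Qed.
Let Delta_lin : lin Delta. Proof. by case: Delta_hom. Qed.
Let DeltaM x y : Delta (x * y) = Delta x * Delta y. Proof. by case: Delta_hom. Qed.
Let Delta1 : Delta 1 = 1. Proof. by case: Delta_hom. Qed.
Let eps_lin a u v : eps (a *: u + v) = a * eps u + eps v. Proof. by case: eps_hom. Qed.
Let epsM x y : eps (x * y) = eps x * eps y. Proof. by case: eps_hom. Qed.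
Let eps1 : eps 1 = 1. Proof. by case: eps_hom. Qed.
Let S_lin : lin S. Proof. by case: S_antihom. Qed.
Let SM x y : S (x * y) = S y * S x. Proof. by case: S_antihom. Qed.
Let S1 : S 1 = 1. Proof. by case: S_antihom. Qed.

Lemma coprod_sweedler a : exists s : seq (A * A), Delta a = \sum_(p <- s) t p.1 p.2.
Proof.
elim/ind: a => [|x y [s1 e1] [s2 e2]|c x y [s1 e1] [s2 e2]|s i|s].
- by exists [:: (1, 1)]; rewrite big_seq1 Delta1 /= t_one.
- exists [seq (p.1 * q.1, p.2 * q.2) | p <- s1, q <- s2].
  rewrite big_allpairs_dep DeltaM e1 e2 mulr_suml; apply: eq_bigr => p _.
  by rewrite mulr_sumr; apply: eq_bigr => q _.
- exists ([seq (c *: p.1, p.2) | p <- s1] ++ s2).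
  rewrite big_cat big_map Delta_lin e1 e2 scaler_sumr; congr (_ + _).
  by apply: eq_bigr => p _; rewrite (linZ ((tensor_bilin t_tensor).1 _)).
- by exists [:: (b s i, 1); (k s, b s i)]; rewrite Delta_b big_cons big_seq1.
- by exists [:: (k s, k s)]; rewrite Delta_k big_seq1.
Qed.

Definition sweedler a := proj1_sig (cid (coprod_sweedler a)).

Lemma sweedlerE a : Delta a = \sum_(p <- sweedler a) t p.1 p.2.
Proof. exact: proj2_sig (cid (coprod_sweedler a)). Qed.

Definition sweedler_sum (W : lmodType C) (f : A -> A -> W) a :=
  \sum_(p <- sweedler a) f p.1 p.2.

Section SweedlerSum.
Variables (W : lmodType C) (f : A -> A -> W) (f_bilin : bilin f).

Lemma sweedler_sum_eq s a :
  Delta a = \sum_(p <- s) t p.1 p.2 -> sweedler_sum f a = \sum_(p <- s) f p.1 p.2.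
Proof.
have lift_sum r : liftAA f (\sum_(p <- r) t p.1 p.2) = \sum_(p <- r) f p.1 p.2.
  by rewrite (lin_sum (lin_lift t_tensor f_bilin)); apply: eq_bigr => p _; rewrite liftE.
by move=> Ds; rewrite /sweedler_sum -lift_sum -sweedlerE Ds lift_sum.
Qed.

Lemma lift_coprod a : liftAA f (Delta a) = sweedler_sum f a.
Proof.
rewrite sweedlerE (lin_sum (lin_lift t_tensor f_bilin)).
by apply: eq_bigr => p _; rewrite liftE.
Qed.

Lemma lin_sweedler_sum : lin (sweedler_sum f).
Proof. by move=> c x y; rewrite -!lift_coprod Delta_lin (lin_lift t_tensor f_bilin). Qed.

Lemma sweedler_sumM x y : sweedler_sum f (x * y) =
  \sum_(p <- sweedler x) \sum_(q <- sweedler y) f (p.1 * q.1) (p.2 * q.2).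
Proof.
rewrite -lift_coprod DeltaM !sweedlerE mulr_suml (lin_sum (lin_lift t_tensor f_bilin)).
apply: eq_bigr => p _; rewrite mulr_sumr (lin_sum (lin_lift t_tensor f_bilin)).
by apply: eq_bigr => q _; rewrite t_mul liftE.
Qed.

Lemma sweedler_sum1 : sweedler_sum f 1 = f 1 1.
Proof.
have D1 : Delta 1 = \sum_(p <- [:: (1, 1)]) t p.1 p.2 by rewrite big_seq1 Delta1 /= t_one.
by rewrite (sweedler_sum_eq D1) big_seq1.
Qed.

Lemma sweedler_sum_b s i : sweedler_sum f (b s i) = f (b s i) 1 + f (k s) (b s i).
Proof.
have Db : Delta (b s i) = \sum_(p <- [:: (b s i, 1); (k s, b s i)]) t p.1 p.2.
  by rewrite Delta_b big_cons big_seq1.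
by rewrite (sweedler_sum_eq Db) big_cons big_seq1.
Qed.

Lemma sweedler_sum_k s : sweedler_sum f (k s) = f (k s) (k s).
Proof.
have Dk : Delta (k s) = \sum_(p <- [:: (k s, k s)]) t p.1 p.2 by rewrite big_seq1 Delta_k.
by rewrite (sweedler_sum_eq Dk) big_seq1.
Qed.

End SweedlerSum.

Lemma sweedler_sum_mul (D : algType C) (f : A -> A -> D) : bilin f ->
  (forall x1 y1 x2 y2, f (x1 * x2) (y1 * y2) = f x1 y1 * f x2 y2) ->
  forall x y, sweedler_sum f (x * y) = sweedler_sum f x * sweedler_sum f y.
Proof.
move=> f_bilin f_mul x y; rewrite sweedler_sumM // /sweedler_sum mulr_suml.
apply: eq_bigr => p _; rewrite mulr_sumr.
by apply: eq_bigr => q _; rewrite f_mul.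
Qed.

Let bilin_counit_l : bilin (fun x y : A => eps x *: y).
Proof.
split=> [y a u v | x a u v] /=; first by rewrite eps_lin scalerDl scalerA.
by rewrite scalerDr !scalerA mulrC.
Qed.

Let bilin_counit_r : bilin (fun x y : A => eps y *: x).
Proof.
split=> [y a u v | x a u v] /=; last by rewrite eps_lin scalerDl scalerA.
by rewrite scalerDr !scalerA mulrC.
Qed.

Let bilin_antipode_l : bilin (fun x y : A => S x * y).
Proof.
split=> [y a u v | x a u v] /=; first by rewrite S_lin mulrDl scalerAl.
by rewrite mulrDr scalerAr.
Qed.

Let bilin_antipode_r : bilin (fun x y : A => x * S y).
Proof.
split=> [y a u v | x a u v] /=; first by rewrite mulrDl scalerAl.
by rewrite S_lin mulrDr scalerAr.
Qed.

Let eps_scale_mul (x1 y1 x2 y2 : A) :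
  eps (x1 * x2) *: (y1 * y2) = (eps x1 *: y1) * (eps x2 *: y2).
Proof. by rewrite -scalerAl -scalerAr scalerA epsM. Qed.

Lemma counit_l a : sweedler_sum (fun x y => eps x *: y) a = a.
Proof.
elim/ind: a => [|x y IHx IHy|c x y IHx IHy|s i|s].
- by rewrite sweedler_sum1 // eps1 scale1r.
- by rewrite (sweedler_sum_mul bilin_counit_l eps_scale_mul) IHx IHy.
- by rewrite (lin_sweedler_sum bilin_counit_l) IHx IHy.
- by rewrite sweedler_sum_b // eps_b scale0r add0r eps_k scale1r.
- by rewrite sweedler_sum_k // eps_k scale1r.
Qed.

Lemma counit_r a : sweedler_sum (fun x y => eps y *: x) a = a.
Proof.
elim/ind: a => [|x y IHx IHy|c x y IHx IHy|s i|s].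
- by rewrite sweedler_sum1 // eps1 scale1r.
- by rewrite (sweedler_sum_mul bilin_counit_r (fun _ _ _ _ => eps_scale_mul _ _ _ _)) IHx IHy.
- by rewrite (lin_sweedler_sum bilin_counit_r) IHx IHy.
- by rewrite sweedler_sum_b // eps_b scale0r addr0 eps1 scale1r.
- by rewrite sweedler_sum_k // eps_k scale1r.
Qed.

Lemma antipode_l a : sweedler_sum (fun x y => S x * y) a = eps a *: 1.
Proof.
elim/ind: a => [|x y IHx IHy|c x y IHx IHy|s i|s].
- by rewrite sweedler_sum1 // S1 mul1r eps1 scale1r.
- rewrite sweedler_sumM //.
  transitivity (\sum_(q <- sweedler y) S q.1 * sweedler_sum (fun x y => S x * y) x * q.2).
    rewrite exchange_big; apply: eq_bigr => q _; rewrite /sweedler_sum mulr_sumr mulr_suml.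
    by apply: eq_bigr => p _; rewrite SM !mulrA.
  rewrite IHx; under eq_bigr => q _ do rewrite -scalerAr mulr1 -scalerAl.
  by rewrite -scaler_sumr; move: IHy; rewrite /sweedler_sum => ->; rewrite epsM scalerA.
- by rewrite (lin_sweedler_sum bilin_antipode_l) IHx IHy eps_lin scalerDl scalerA.
- by rewrite sweedler_sum_b // S_b S_k mulr1 eps_b scale0r (anticomm_kb rels) addrN.
- by rewrite sweedler_sum_k // S_k (mulk_neq rels) ?eps_k ?scale1r //; case: s.
Qed.

Lemma antipode_r a : sweedler_sum (fun x y => x * S y) a = eps a *: 1.
Proof.
elim/ind: a => [|x y IHx IHy|c x y IHx IHy|s i|s].
- by rewrite sweedler_sum1 // S1 mul1r eps1 scale1r.
- rewrite sweedler_sumM //.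
  transitivity (\sum_(p <- sweedler x) p.1 * sweedler_sum (fun x y => x * S y) y * S p.2).
    apply: eq_bigr => p _; rewrite /sweedler_sum mulr_sumr mulr_suml.
    by apply: eq_bigr => q _; rewrite SM !mulrA.
  rewrite IHy; under eq_bigr => p _ do rewrite -scalerAr mulr1 -scalerAl.
  by rewrite -scaler_sumr; move: IHx; rewrite /sweedler_sum => ->; rewrite epsM scalerA mulrC.
- by rewrite (lin_sweedler_sum bilin_antipode_r) IHx IHy eps_lin scalerDl scalerA.
- rewrite sweedler_sum_b // S_b S1 mulr1 mulrA (anticomm_kb rels) mulNr -mulrA.
  by rewrite (mulk_neq rels) ?mulr1 ?addrN ?eps_b ?scale0r //; case: s.
- by rewrite sweedler_sum_k // S_k (mulk_neq rels) ?eps_k ?scale1r //; case: s.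
Qed.

Definition trilin (W : lmodType C) (h : A -> A -> A -> W) :=
  [/\ forall y z, lin (fun x => h x y z), forall x z, lin (fun y => h x y z)
    & forall x y, lin (h x y)].

(* The two sides of coassociativity, [(Delta (x) id) Delta a] and
   [(id (x) Delta) Delta a], paired with a trilinear [h]. *)
Definition coassoc_l (W : lmodType C) (h : A -> A -> A -> W) a :=
  sweedler_sum (fun x y => sweedler_sum (fun p q => h p q y) x) a.
Definition coassoc_r (W : lmodType C) (h : A -> A -> A -> W) a :=
  sweedler_sum (fun x y => sweedler_sum (fun p q => h x p q) y) a.

Section Trilinear.
Variables (W : lmodType C) (h : A -> A -> A -> W) (h_trilin : trilin h).

Lemma trilin_bilin12 z : bilin (fun x y => h x y z).
Proof. by case: h_trilin. Qed.

Lemma trilin_bilin23 x : bilin (h x).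
Proof. by case: h_trilin. Qed.

Lemma bilin_coassoc_l : bilin (fun x y => sweedler_sum (fun p q => h p q y) x).
Proof.
split=> [y|x]; first exact: lin_sweedler_sum (trilin_bilin12 y).
by apply: lin_bigsum => p; case: h_trilin.
Qed.

Lemma bilin_coassoc_r : bilin (fun x y => sweedler_sum (fun p q => h x p q) y).
Proof.
split=> [y|x]; last exact: lin_sweedler_sum (trilin_bilin23 x).
by apply: lin_bigsum => p; case: h_trilin.
Qed.

End Trilinear.

Lemma sweedler_coassoc a (W : lmodType C) (h : A -> A -> A -> W) :
  trilin h -> coassoc_l h a = coassoc_r h a.
Proof.
elim/ind: a W h => [|x y IHx IHy|c x y IHx IHy|s i|s] W h h_trilin;
  have [bl br] := (bilin_coassoc_l h_trilin, bilin_coassoc_r h_trilin);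
  have [b12 b23] := (trilin_bilin12 h_trilin, trilin_bilin23 h_trilin);
  rewrite /coassoc_l /coassoc_r.
- rewrite (sweedler_sum1 bl) (sweedler_sum1 br).
  by rewrite (sweedler_sum1 (b12 _)) (sweedler_sum1 (b23 _)).
- (* Each side at [x * y] is the same side at [x] (resp. [y]) for a modified
     trilinear pairing, so the induction hypotheses apply. *)
  pose hx U1 U2 V := \sum_(q <- sweedler y) \sum_(v <- sweedler q.1)
    h (U1 * v.1) (U2 * v.2) (V * q.2).
  have hx_trilin : trilin hx.
    case: h_trilin => h1 h2 h3; split=> [Q R|P R|P Q];
      apply: lin_bigsum => q; apply: lin_bigsum => v.
    + exact: (lin_mulr v.1 (h1 _ _)).
    + exact: (lin_mulr v.2 (h2 _ _)).
    + exact: (lin_mulr q.2 (h3 _ _)).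
  pose hy (p u : A * A) V1 V2 Q2 := h (p.1 * V1) (u.1 * V2) (u.2 * Q2).
  have hy_trilin p u : trilin (hy p u).
    case: h_trilin => h1 h2 h3; split=> [Q R|P R|P Q].
    + exact: (lin_mull p.1 (h1 _ _)).
    + exact: (lin_mull u.1 (h2 _ _)).
    + exact: (lin_mull u.2 (h3 _ _)).
  have -> : sweedler_sum (fun x y => sweedler_sum (fun p q => h p q y) x) (x * y) =
      coassoc_l hx x.
    rewrite (sweedler_sumM bl) /coassoc_l [in RHS]/sweedler_sum; apply: eq_bigr => p _.
    under eq_bigr => q _ do rewrite (sweedler_sumM (b12 _)).
    by rewrite exchange_big.
  have -> : sweedler_sum (fun x y => sweedler_sum (fun p q => h x p q) y) (x * y) =
      \sum_(p <- sweedler x) \sum_(u <- sweedler p.2) coassoc_r (hy p u) y.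
    rewrite (sweedler_sumM br); apply: eq_bigr => p _.
    under eq_bigr => q _ do rewrite (sweedler_sumM (b23 _)).
    by rewrite exchange_big.
  rewrite (IHx _ _ hx_trilin).
  by apply: eq_bigr => p _; apply: eq_bigr => u _; exact: IHy (hy_trilin p u).
- rewrite (lin_sweedler_sum bl) (lin_sweedler_sum br).
  by congr (_ *: _ + _); [exact: IHx | exact: IHy].
- rewrite (sweedler_sum_b bl) (sweedler_sum_b br) (sweedler_sum_b (b12 _)).
  rewrite (sweedler_sum_k (b12 _)) (sweedler_sum1 (b23 _)) (sweedler_sum_b (b23 _)).
  by rewrite addrA.
- rewrite (sweedler_sum_k bl) (sweedler_sum_k br).
  by rewrite (sweedler_sum_k (b12 _)) (sweedler_sum_k (b23 _)).
Qed.

Section Coassociativity.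
Variables (AAA : lmodType C) (t3 : AA -> A -> AAA)
  (lift3 : forall W : lmodType C, (AA -> A -> W) -> AAA -> W).
Hypothesis t3_tensor : is_tensor t3 lift3.

Lemma trilin_t3 : trilin (fun x y z => t3 (t x y) z).
Proof.
have [t_bilin t3_bilin] := (tensor_bilin t_tensor, tensor_bilin t3_tensor).
split=> [y z|x z|x y]; last exact: t3_bilin.2.
- exact: lin_comp (t_bilin.1 y) (t3_bilin.1 z).
- exact: lin_comp (t_bilin.2 x) (t3_bilin.1 z).
Qed.

Lemma coassoc a : liftAA (fun x y => t3 (Delta x) y) (Delta a) =
  liftAA (fun x y => liftAA (fun p q => t3 (t x p) q) (Delta y)) (Delta a).
Proof.
have t3_bilin := tensor_bilin t3_tensor.
have Delta_t3_bilin : bilin (fun x y => t3 (Delta x) y).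
  by split=> [y|x]; [exact: lin_comp Delta_lin (t3_bilin.1 y) | exact: t3_bilin.2].
have -> : (fun x y => liftAA (fun p q => t3 (t x p) q) (Delta y)) =
          (fun x y => sweedler_sum (fun p q => t3 (t x p) q) y).
  apply/funext => x; apply/funext => y; apply: lift_coprod.
  exact: trilin_bilin23 trilin_t3 x.
rewrite (lift_coprod Delta_t3_bilin) (lift_coprod (bilin_coassoc_r trilin_t3)).
rewrite -/(coassoc_r _ a) -(sweedler_coassoc a trilin_t3).
rewrite /coassoc_l /sweedler_sum; apply: eq_bigr => p _.
by rewrite sweedlerE (lin_sum (t3_bilin.1 _)).
Qed.

Lemma hopf_axioms : is_hopf t liftAA t3 Delta eps S.
Proof.
split=> [|||a]; [exact: (conj Delta_hom (conj eps_hom S_lin)) | exact: coassoc | move=> a |].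
- by rewrite (lift_coprod bilin_counit_l) (lift_coprod bilin_counit_r) counit_l counit_r.
- by rewrite (lift_coprod bilin_antipode_l) (lift_coprod bilin_antipode_r) antipode_l antipode_r.
Qed.

End Coassociativity.

End HopfAxioms.

Theorem mainTheorem2 (R : realType)
  (A : algType R[i]) (b : bool -> nat -> A) (k : bool -> A)
  (HA : is_PB b k)
  (AA : algType R[i]) (t : A -> A -> AA)
  (liftAA : forall W : lmodType R[i], (A -> A -> W) -> AA -> W)
  (HAA : is_algtensor t liftAA)
  (AAA : lmodType R[i]) (t3 : AA -> A -> AAA)
  (lift3 : forall W : lmodType R[i], (AA -> A -> W) -> AAA -> W)
  (HAAA : is_tensor t3 lift3) :
  exists (Delta : A -> AA) (eps : A -> R[i]) (S : A -> A),
    [/\ (forall s i, Delta (b s i) = t (b s i) 1 + t (k s) (b s i)) /\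
        (forall s, Delta (k s) = t (k s) (k s)),
        (forall s i, eps (b s i) = 0) /\ (forall s, eps (k s) = 1),
        (forall s i, S (b s i) = b s i * k (~~ s)) /\ (forall s, S (k s) = k (~~ s)),
        (forall Delta' : A -> AA, alg_hom Delta' ->
           (forall s i, Delta' (b s i) = t (b s i) 1 + t (k s) (b s i)) ->
           (forall s, Delta' (k s) = t (k s) (k s)) -> forall x, Delta' x = Delta x) /\
        (forall eps' : A -> R[i], char_hom eps' ->
           (forall s i, eps' (b s i) = 0) -> (forall s, eps' (k s) = 1) ->
           forall x, eps' x = eps x) /\
        (forall S' : A -> A, alg_antihom S' ->
           (forall s i, S' (b s i) = b s i * k (~~ s)) -> (forall s, S' (k s) = k (~~ s)) ->
           forall x, S' x = S x) /\
        alg_antihom S &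
        is_hopf t liftAA t3 Delta eps S].
Proof.
have [rels univ] := HA; have [t_tensor t_mul t_one] := HAA.
have [Delta [Delta_hom Delta_b Delta_k Delta_unique]] :=
  univ _ _ _ (coprod_rels rels (tensor_bilin t_tensor) t_mul t_one).
have [eps [eps_hom eps_b eps_k eps_unique]] := univ _ _ _ (counit_rels R[i]).
have [S [S_antihom S_b S_k S_unique]] := univ _ _ _ (antipode_rels rels).
exists Delta, eps, S; split=> //.
exact (hopf_axioms HA HAA Delta_hom Delta_b Delta_k eps_hom eps_b eps_k S_antihom S_b S_k HAAA).
Qed.
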